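(* For every $\theta>0$ one has $1-4(\theta+1)\lambda(\theta)>0$, so $j$ is well defined on $(0,\infty)$, and $j$ satisfies for all $\theta>0$ \[\big(4\theta\lambda(\theta)-e^{-f'(\theta)}\big)j'(\theta)+\frac{f''(\theta)}{2}\big(4\theta^2\lambda(\theta)+e^{-f'(\theta)}\big)+4\lambda(\theta)\Big(\frac12-\theta\Big)=0.\]
   Context: Define $\lambda:[0,\infty)\to(0,1/4]$ by $\lambda(0)=1/4$ and, for $\theta>0$, $\lambda(\theta)$ is the unique $\lambda\in(0,1/4)$ with $-1+\frac{\operatorname{artanh}(\sqrt{1-4\lambda})}{\sqrt{1-4\lambda}}=\theta$. For $\theta>0$ set $f(\theta)=-\ln\lambda(\theta)-2\theta-\theta\ln\big(1-4\lambda(\theta)\big)$ and $j(\theta)=-\tfrac12\ln\big(1-4(\theta+1)\lambda(\theta)\big)+\tfrac12\ln 2$. *)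

From Stdlib Require Import Reals Lra ClassicalEpsilon.
From Coquelicot Require Import Coquelicot.
Open Scope R_scope.

Definition artanh (x : R) : R := / 2 * ln ((1 + x) / (1 - x)).

Definition lam_eq (theta l : R) : Prop :=
  0 < l < / 4 /\
  -1 + artanh (sqrt (1 - 4 * l)) / sqrt (1 - 4 * l) = theta.

(* lambda(0) = 1/4; for theta > 0, the (unique) l in (0,1/4) solving lam_eq.
   (Values for theta < 0 are irrelevant junk.) *)
Definition lam (theta : R) : R :=
  match Rle_dec theta 0 with
  | left _ => / 4
  | right _ => epsilon (inhabits 0) (lam_eq theta)
  end.

Definition f_fun (theta : R) : R :=
  - ln (lam theta) - 2 * theta - theta * ln (1 - 4 * lam theta).

Definition j_fun (theta : R) : R :=
  - / 2 * ln (1 - 4 * (theta + 1) * lam theta) + / 2 * ln 2.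

(* Put s = sqrt (1 - 4 lam), so that lam = (1 - s^2)/4.  The defining equation of lam says
   exactly that s is the inverse of theta_of s = artanh s / s - 1, a map from (0,1) onto
   (0,oo) with positive derivative (by artanh s < s / (1 - s^2)).  The inverse function
   theorem then gives lam' = -2 lam (1 - 4 lam) / (1 - 4 (theta + 1) lam), whose denominator
   is, up to a positive factor, theta_of' (s) > 0.  With this, f' = -ln (1 - 4 lam), so that
   exp (- f') = 1 - 4 lam, and f'' and j' are rational in lam and theta: the differential
   equation reduces to a polynomial identity. *)

From Stdlib Require Import Reals Ranalysis5 Lra ClassicalEpsilon.
From Coquelicot Require Import Coquelicot.
Open Scope R_scope.

Lemma lt_of_is_derive_pos (f df : R -> R) (a b : R) :
  a < b ->
  (forall x, a <= x <= b -> is_derive f x (df x)) ->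
  (forall x, a < x < b -> 0 < df x) ->
  f a < f b.
Proof.
  intros Hab Hf Hdf.
  destruct (MVT_cor2 f df a b Hab) as [c [Hc Hcab]].
  - intros c Hc. apply is_derive_Reals, Hf, Hc.
  - pose proof (Hdf c Hcab). nra.
Qed.

Lemma is_derive_ext_pos (f g : R -> R) (t l : R) :
  0 < t -> (forall x, 0 < x -> f x = g x) -> is_derive f t l -> is_derive g t l.
Proof.
  intros Ht Hfg. apply is_derive_ext_loc.
  apply (filter_imp (fun x => 0 < x)); [exact Hfg | exact (open_gt 0 t Ht)].
Qed.

Lemma inverse_lt (f g : R -> R) (a b lb ub : R) :
  (forall x x', a < x -> x < x' -> x' < b -> f x < f x') ->
  (forall z, lb <= z <= ub -> a < g z < b /\ f (g z) = z) ->
  forall z z', lb <= z -> z < z' -> z' <= ub -> g z < g z'.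
Proof.
  intros f_lt Hg z z' Hz Hzz' Hz'.
  destruct (Hg z ltac:(lra)) as [Hgz Efz]. destruct (Hg z' ltac:(lra)) as [Hgz' Efz'].
  destruct (Rlt_le_dec (g z) (g z')) as [Hlt | Hle]; [exact Hlt |].
  destruct (Rle_lt_or_eq_dec _ _ Hle) as [Hlt | Heq].
  - pose proof (f_lt (g z') (g z) ltac:(lra) Hlt ltac:(lra)). lra.
  - rewrite Heq in Efz'. lra.
Qed.

Lemma is_derive_inverse_incr (f g df : R -> R) (a b lb ub y : R) :
  (forall x, a < x < b -> is_derive f x (df x)) ->
  (forall x, a < x < b -> 0 < df x) ->
  lb < y < ub ->
  (forall z, lb <= z <= ub -> a < g z < b /\ f (g z) = z) ->
  is_derive g y (/ df (g y)).
Proof.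
  intros Hf Hdf Hy Hg.
  assert (f_lt : forall x x', a < x -> x < x' -> x' < b -> f x < f x').
  { intros x x' Hx Hxx' Hx'. apply (lt_of_is_derive_pos f df); [lra | |];
      intros u Hu; [apply Hf | apply Hdf]; lra. }
  pose proof (inverse_lt f g a b lb ub f_lt Hg) as g_lt.
  destruct (Hg lb ltac:(lra)) as [Hglb Eflb]. destruct (Hg ub ltac:(lra)) as [Hgub Efub].
  destruct (Hg y ltac:(lra)) as [Hgy _].
  assert (g_le : forall z, lb <= z <= ub -> g lb <= g z <= g ub).
  { intros z Hz. split.
    - destruct (Rle_lt_or_eq_dec _ _ (proj1 Hz)) as [h | <-]; [apply Rlt_le, g_lt |]; lra.
    - destruct (Rle_lt_or_eq_dec _ _ (proj2 Hz)) as [h | ->]; [apply Rlt_le, g_lt |]; lra. }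
  assert (Hgy_in : g lb <= g y <= g ub) by (apply g_le; lra).
  assert (f_der : forall x, g lb <= x <= g ub -> is_derive f x (df x)) by (intros; apply Hf; lra).
  assert (g_cont : continuity_pt g y).
  { apply (continuity_pt_recip_interv f g (g lb) (g ub)).
    - apply g_lt; lra.
    - intros x x' Hx Hxx' Hx'. apply f_lt; lra.
    - intros x Hx Hx'. rewrite Eflb in Hx. rewrite Efub in Hx'. unfold comp, id. apply Hg. lra.
    - intros x Hx Hx'. rewrite Eflb in Hx. rewrite Efub in Hx'. apply g_le. lra.
    - intros x Hx. apply derivable_continuous_pt. exists (df x). apply is_derive_Reals, f_der, Hx.
    - rewrite Eflb, Efub. exact Hy. }
  assert (Prf : forall x, g lb <= x <= g ub -> derivable_pt f x).
  { intros x Hx. exists (df x). apply is_derive_Reals, f_der, Hx. }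
  assert (Hd : derive_pt f (g y) (Prf (g y) Hgy_in) = df (g y)).
  { apply derive_pt_eq_0, is_derive_Reals, f_der, Hgy_in. }
  pose proof (derivable_pt_lim_recip_interv f g lb ub y Prf g_cont ltac:(lra) Hy Hgy_in) as H.
  rewrite Hd in H. apply is_derive_Reals. rewrite <- (Rmult_1_l (/ _)). apply H.
  - intros z Hz. unfold comp, id. apply Hg, Hz.
  - pose proof (Hdf (g y) Hgy). lra.
Qed.

Lemma is_derive_artanh (x : R) : -1 < x < 1 -> is_derive artanh x (/ (1 - x ^ 2)).
Proof.
  intros Hx. unfold artanh. auto_derive.
  - repeat split; try lra. apply Rdiv_lt_0_compat; lra.
  - field. split; nra.
Qed.

Lemma artanh_0 : artanh 0 = 0.
Proof. unfold artanh. rewrite Rminus_0_r, Rplus_0_r, Rdiv_1_l, Rinv_1, ln_1. ring. Qed.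

Lemma artanh_bounds (s : R) : 0 < s < 1 -> s < artanh s < s / (1 - s ^ 2).
Proof.
  intros Hs. split.
  - enough (artanh 0 - 0 < artanh s - s) by (rewrite artanh_0 in *; lra).
    apply (lt_of_is_derive_pos (fun x => artanh x - x) (fun x => / (1 - x ^ 2) - 1)); [lra | |].
    + intros x Hx. apply (is_derive_minus artanh (fun x => x)).
      * apply is_derive_artanh; lra.
      * exact (is_derive_id x).
    + intros x Hx. enough (1 < / (1 - x ^ 2)) by lra.
      rewrite <- Rinv_1. apply Rinv_lt_contravar; nra.
  - enough (0 / (1 - 0 ^ 2) - artanh 0 < s / (1 - s ^ 2) - artanh s)
      by (rewrite artanh_0 in *; lra).
    apply (lt_of_is_derive_pos (fun x => x / (1 - x ^ 2) - artanh x)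
             (fun x => 2 * x ^ 2 / (1 - x ^ 2) ^ 2)); [lra | |].
    + intros x Hx. cbv beta.
      replace (2 * x ^ 2 / (1 - x ^ 2) ^ 2) with ((1 + x ^ 2) / (1 - x ^ 2) ^ 2 - / (1 - x ^ 2))
        by (field; nra).
      apply (is_derive_minus (fun x => x / (1 - x ^ 2)) artanh).
      * auto_derive; [nra | field; nra].
      * apply is_derive_artanh; lra.
    + intros x Hx. apply Rdiv_lt_0_compat; [nra | apply pow_lt; nra].
Qed.

Definition theta_of (s : R) : R := artanh s / s - 1.

Definition Dtheta_of (s : R) : R := (/ (1 - s ^ 2) - artanh s / s) / s.

Lemma is_derive_theta_of (s : R) : 0 < s < 1 -> is_derive theta_of s (Dtheta_of s).
Proof.
  intros Hs. unfold theta_of, Dtheta_of, artanh. auto_derive.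
  - repeat split; try lra. apply Rdiv_lt_0_compat; lra.
  - set (L := ln _). field. repeat split; nra.
Qed.

Lemma artanh_div_lt (s : R) : 0 < s < 1 -> artanh s / s < / (1 - s ^ 2).
Proof.
  intros Hs. apply (Rmult_lt_reg_r s); [lra |].
  replace (artanh s / s * s) with (artanh s) by (field; lra).
  replace (/ (1 - s ^ 2) * s) with (s / (1 - s ^ 2)) by (field; nra).
  apply artanh_bounds, Hs.
Qed.

Lemma Dtheta_of_pos (s : R) : 0 < s < 1 -> 0 < Dtheta_of s.
Proof.
  intros Hs. apply Rdiv_lt_0_compat; [pose proof (artanh_div_lt s Hs) |]; lra.
Qed.

Lemma theta_of_lt (x y : R) : 0 < x -> x < y -> y < 1 -> theta_of x < theta_of y.
Proof.
  intros Hx Hxy Hy. apply (lt_of_is_derive_pos theta_of Dtheta_of); [lra | |];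
    intros s Hs; [apply is_derive_theta_of | apply Dtheta_of_pos]; lra.
Qed.

Lemma theta_of_surjective (th : R) : 0 < th -> exists s, 0 < s < 1 /\ theta_of s = th.
Proof.
  intros Hth.
  set (a := th / (th + 1)).
  assert (Ha : 0 < a < 1).
  { unfold a. split; [apply Rdiv_lt_0_compat; lra |].
    apply (Rmult_lt_reg_r (th + 1)); [lra |]. field_simplify; lra. }
  assert (Hta : theta_of a < th).
  { unfold theta_of. pose proof (artanh_div_lt a Ha).
    assert (/ (1 - a ^ 2) = (th + 1) ^ 2 / (2 * th + 1)) by (unfold a; field; lra).
    assert ((th + 1) ^ 2 / (2 * th + 1) < th + 1).
    { apply (Rmult_lt_reg_r (2 * th + 1)); [lra |]. field_simplify; nra. }
    lra. }
  set (b := 1 - exp (- (2 * (th + 1)))).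
  assert (Hexp : exp (2 * (th + 1)) * (1 - b) = 1).
  { unfold b. replace (1 - (1 - exp _)) with (exp (- (2 * (th + 1)))) by ring.
    rewrite <- exp_plus, Rplus_opp_r. apply exp_0. }
  assert (Hb : 0 < b < 1).
  { pose proof (exp_pos (2 * (th + 1))). pose proof (exp_pos (- (2 * (th + 1)))).
    assert (1 < exp (2 * (th + 1))) by (rewrite <- exp_0 at 1; apply exp_increasing; lra).
    unfold b in *. nra. }
  assert (Htb : th < theta_of b).
  { assert (Hart : th + 1 < artanh b).
    { assert (exp (2 * (th + 1)) < (1 + b) / (1 - b)).
      { apply (Rmult_lt_reg_r (1 - b)); [lra |].
        replace ((1 + b) / (1 - b) * (1 - b)) with (1 + b) by (field; lra). lra. }
      pose proof (ln_increasing _ _ (exp_pos _) H) as Hln. rewrite ln_exp in Hln.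
      unfold artanh. lra. }
    assert (artanh b <= artanh b / b).
    { apply (Rmult_le_reg_r b); [lra |].
      replace (artanh b / b * b) with (artanh b) by (field; lra). nra. }
    unfold theta_of. lra. }
  assert (Hab : a < b).
  { destruct (Rlt_le_dec a b) as [Hlt | Hle]; [exact Hlt |].
    destruct (Rle_lt_or_eq_dec _ _ Hle) as [Hlt | Heq].
    - pose proof (theta_of_lt b a ltac:(lra) Hlt ltac:(lra)). lra.
    - rewrite Heq in Htb. lra. }
  destruct (IVT_interv (fun x => theta_of x - th) a b) as [s [Hs Es]]; [| lra .. |].
  - intros x Hx. apply continuity_pt_minus; [| apply continuity_pt_const; intros u v; reflexivity].
    apply derivable_continuous_pt. exists (Dtheta_of x).
    apply is_derive_Reals, is_derive_theta_of. lra.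
  - exists s. split; lra.
Qed.

Lemma lam_eq_theta_of (th s : R) : 0 < s < 1 -> lam_eq th ((1 - s ^ 2) / 4) <-> theta_of s = th.
Proof.
  intros Hs. unfold lam_eq, theta_of.
  replace (1 - 4 * ((1 - s ^ 2) / 4)) with (s ^ 2) by field.
  rewrite sqrt_pow2 by lra. split; [intros [_ E]; lra | intros E; split; [split; nra | lra]].
Qed.

Lemma lam_spec (th : R) : 0 < th -> lam_eq th (lam th).
Proof.
  intros Hth. unfold lam. destruct (Rle_dec th 0) as [Hle | _]; [lra |].
  apply epsilon_spec. destruct (theta_of_surjective th Hth) as [s [Hs Es]].
  exists ((1 - s ^ 2) / 4). apply lam_eq_theta_of; assumption.
Qed.

Definition sqrt_disc (th : R) : R := sqrt (1 - 4 * lam th).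

Section SqrtDisc.

Variable th : R.
Hypothesis th_pos : 0 < th.

Lemma lam_bounds : 0 < lam th < / 4.
Proof. apply lam_spec, th_pos. Qed.

Lemma sqrt_disc_bounds : 0 < sqrt_disc th < 1.
Proof.
  pose proof lam_bounds. unfold sqrt_disc. split.
  - apply sqrt_lt_R0. lra.
  - rewrite <- sqrt_1 at 2. apply sqrt_lt_1_alt; lra.
Qed.

Lemma sqrt_disc_sq : sqrt_disc th ^ 2 = 1 - 4 * lam th.
Proof. pose proof lam_bounds. apply pow2_sqrt. lra. Qed.

Lemma theta_of_sqrt_disc : theta_of (sqrt_disc th) = th.
Proof.
  pose proof (lam_eq_theta_of th (sqrt_disc th) sqrt_disc_bounds) as E.
  apply E. rewrite sqrt_disc_sq. replace ((1 - (1 - 4 * lam th)) / 4) with (lam th) by field.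
  apply lam_spec, th_pos.
Qed.

Lemma Dtheta_of_sqrt_disc :
  Dtheta_of (sqrt_disc th) = (1 - 4 * (th + 1) * lam th) / (4 * lam th * sqrt_disc th).
Proof.
  pose proof sqrt_disc_bounds. pose proof lam_bounds.
  pose proof theta_of_sqrt_disc as E. unfold theta_of in E.
  unfold Dtheta_of. replace (artanh (sqrt_disc th) / sqrt_disc th) with (th + 1) by lra.
  rewrite sqrt_disc_sq. field. lra.
Qed.

Lemma lam_gap_pos : 0 < 1 - 4 * (th + 1) * lam th.
Proof.
  pose proof sqrt_disc_bounds. pose proof lam_bounds.
  pose proof (Dtheta_of_pos _ sqrt_disc_bounds) as Hpos. rewrite Dtheta_of_sqrt_disc in Hpos.
  assert (0 < 4 * lam th * sqrt_disc th) by nra.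
  apply (Rmult_lt_reg_r (/ (4 * lam th * sqrt_disc th))); [apply Rinv_0_lt_compat; lra |].
  rewrite Rmult_0_l. exact Hpos.
Qed.

End SqrtDisc.

Lemma is_derive_sqrt_disc (th : R) : 0 < th ->
  is_derive sqrt_disc th (4 * lam th * sqrt_disc th / (1 - 4 * (th + 1) * lam th)).
Proof.
  intros Hth.
  pose proof (sqrt_disc_bounds th Hth). pose proof (lam_bounds th Hth).
  pose proof (lam_gap_pos th Hth).
  replace (4 * lam th * sqrt_disc th / _) with (/ Dtheta_of (sqrt_disc th))
    by (rewrite (Dtheta_of_sqrt_disc th Hth); field; split; nra).
  apply (is_derive_inverse_incr theta_of sqrt_disc Dtheta_of 0 1 (th / 2) (th + 1)).
  - apply is_derive_theta_of.
  - apply Dtheta_of_pos.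
  - lra.
  - intros z Hz. split; [apply sqrt_disc_bounds | apply theta_of_sqrt_disc]; lra.
Qed.

Lemma is_derive_lam (th : R) : 0 < th ->
  is_derive lam th (- 2 * lam th * (1 - 4 * lam th) / (1 - 4 * (th + 1) * lam th)).
Proof.
  intros Hth.
  pose proof (sqrt_disc_bounds th Hth). pose proof (lam_bounds th Hth).
  pose proof (lam_gap_pos th Hth).
  pose proof (is_derive_sqrt_disc th Hth) as Dsqrt.
  apply (is_derive_ext_pos (fun t => (1 - sqrt_disc t ^ 2) / 4)); [exact Hth | |].
  - intros t Ht. rewrite (sqrt_disc_sq t Ht). field.
  - auto_derive; [eexists; exact Dsqrt |].
    change (Derive (fun x => sqrt_disc x) th) with (Derive sqrt_disc th).
    rewrite (is_derive_unique _ _ _ Dsqrt), <- (sqrt_disc_sq th Hth).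
    field. lra.
Qed.

Lemma is_derive_f_fun (th : R) : 0 < th -> is_derive f_fun th (- ln (1 - 4 * lam th)).
Proof.
  intros Hth. pose proof (lam_bounds th Hth). pose proof (lam_gap_pos th Hth).
  pose proof (is_derive_lam th Hth) as Dlam.
  unfold f_fun. auto_derive.
  - repeat split; try lra; eexists; exact Dlam.
  - change (Derive (fun x => lam x) th) with (Derive lam th).
    rewrite (is_derive_unique _ _ _ Dlam).
    replace (1 + - (4 * lam th)) with (1 - 4 * lam th) by ring.
    field. lra.
Qed.

Lemma is_derive_j_fun (th : R) : 0 < th ->
  is_derive j_fun th
    (2 * lam th * (4 * (th + 1) * lam th - 2 * th - 1) / (1 - 4 * (th + 1) * lam th) ^ 2).
Proof.
  intros Hth. pose proof (lam_bounds th Hth). pose proof (lam_gap_pos th Hth).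
  pose proof (is_derive_lam th Hth) as Dlam.
  unfold j_fun. auto_derive.
  - repeat split; try lra; eexists; exact Dlam.
  - change (Derive (fun x => lam x) th) with (Derive lam th).
    rewrite (is_derive_unique _ _ _ Dlam). field. lra.
Qed.

Lemma is_derive_Derive_f_fun (th : R) : 0 < th ->
  is_derive (Derive f_fun) th (- 8 * lam th / (1 - 4 * (th + 1) * lam th)).
Proof.
  intros Hth. pose proof (lam_bounds th Hth). pose proof (lam_gap_pos th Hth).
  apply (is_derive_ext_pos (fun t => - ln (1 - 4 * lam t))); [exact Hth | |].
  - intros t Ht. symmetry. apply is_derive_unique, is_derive_f_fun, Ht.
  - auto_derive.
    + split; [eexists; exact (is_derive_lam th Hth) |]. lra.
    + change (Derive (fun x => lam x) th) with (Derive lam th).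
      rewrite (is_derive_unique _ _ _ (is_derive_lam th Hth)). field. lra.
Qed.

Theorem proposition3 :
  forall theta : R, 0 < theta ->
    0 < 1 - 4 * (theta + 1) * lam theta /\
    ex_derive f_fun theta /\ ex_derive (Derive f_fun) theta /\ ex_derive j_fun theta /\
    (4 * theta * lam theta - exp (- Derive f_fun theta)) * Derive j_fun theta
    + Derive (Derive f_fun) theta / 2
        * (4 * theta ^ 2 * lam theta + exp (- Derive f_fun theta))
    + 4 * lam theta * (/ 2 - theta) = 0.
Proof.
  intros th Hth.
  pose proof (lam_bounds th Hth). pose proof (lam_gap_pos th Hth) as Hgap.
  pose proof (is_derive_f_fun th Hth) as Df.
  pose proof (is_derive_Derive_f_fun th Hth) as D2f.
  pose proof (is_derive_j_fun th Hth) as Dj.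
  split; [exact Hgap |].
  split; [eexists; exact Df |].
  split; [eexists; exact D2f |].
  split; [eexists; exact Dj |].
  rewrite (is_derive_unique _ _ _ Df), (is_derive_unique _ _ _ D2f), (is_derive_unique _ _ _ Dj).
  rewrite Ropp_involutive, exp_ln by lra.
  field. lra.
Qed.
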